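(* Let $m\ge1$, $M=2^m$, $N\ge1$, and let bit probabilities $P_{C_0}(0),\ldots,P_{C_{m-1}}(0)\in(0,1)$ be given, with $P_{C_k}(1)=1-P_{C_k}(0)$. Let $\mathbb{X}$ have rows $\boldsymbol{x}_0,\ldots,\boldsymbol{x}_{M-1}\in\mathbb{R}^N$, let $\mathbb{S}=\mathring{\mathbb{X}}$ be its transform (rows $\boldsymbol{s}_i=\sum_{j}\boldsymbol{x}_j\gamma_{i,j}\sqrt{P_j}$), and let $\tilde{\mathbb{X}}$ and $\tilde{\mathbb{S}}$ be the Hadamard transforms of $\mathbb{X}$ and $\mathbb{S}$. Then $$\tilde{\boldsymbol{s}}_i=\psi_i\sum_{j=0}^{M-1}\tilde{\boldsymbol{x}}_j\prod_{\substack{k=0\\ n_{j,k}\ne n_{i,k}}}^{m-1}\big(P_{C_k}(0)-P_{C_k}(n_{j,k})\big),\qquad i=0,\ldots,M-1,$$ $$\tilde{\boldsymbol{x}}_j=\sum_{i=0}^{M-1}\frac{\tilde{\boldsymbol{s}}_i}{\psi_i}\prod_{\substack{k=0\\ n_{i,k}\ne n_{j,k}}}^{m-1}\big(P_{C_k}(n_{i,k})-P_{C_k}(0)\big),\qquad j=0,\ldots,M-1,$$ where $\psi_i=\prod_{k:\,n_{i,k}=1}2\sqrt{P_{C_k}(0)P_{C_k}(1)}$ and a product over the empty set equals $1$.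
   Context: For an integer $0\le i\le M-1$, $n_{i,k}\in\{0,1\}$ denotes the $k$-th bit of its base-2 representation ($i=\sum_k n_{i,k}2^k$); $\bar b=1-b$ for a bit $b$. Symbol probabilities: $P_i=\prod_{k=0}^{m-1}P_{C_k}(n_{i,k})$. Coefficients: $\gamma_{i,j}=\prod_{k=0}^{m-1}\big[(-1)^{\bar n_{i,k}n_{j,k}}\sqrt{P_{C_k}(0)}+(-1)^{n_{i,k}\bar n_{j,k}}\sqrt{P_{C_k}(1)}\big]$. Hadamard coefficients: $h_{i,j}=\prod_{k=0}^{m-1}(-1)^{n_{i,k}n_{j,k}}$. The Hadamard transform of a matrix with rows $\boldsymbol{x}_0,\ldots,\boldsymbol{x}_{M-1}$ is the matrix with rows $\tilde{\boldsymbol{x}}_i=\frac1M\sum_{j=0}^{M-1}\boldsymbol{x}_jh_{i,j}$. *)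

(* Real scalars: an arbitrary real closed field R (has Num.sqrt);
   the real numbers are an instance. *)
From HB Require Import structures.
From mathcomp Require Import all_boot all_order all_algebra.
Set Implicit Arguments. Unset Strict Implicit. Unset Printing Implicit Defensive.
Import Order.TTheory GRing.Theory Num.Theory.
Local Open Scope ring_scope.

Definition bit (i k : nat) : bool := odd (i %/ 2 ^ k).

Section Defs.
Variables (R : rcfType) (m : nat) (p0 : 'I_m -> R).

Definition Pc (k : 'I_m) (b : bool) : R := if b then 1 - p0 k else p0 k.

Definition Psym (i : 'I_(2 ^ m)) : R := \prod_(k < m) Pc k (bit i k).

Definition gam (i j : 'I_(2 ^ m)) : R :=
  \prod_(k < m)
    ((-1) ^+ (~~ bit i k && bit j k) * Num.sqrt (Pc k false)
     + (-1) ^+ (bit i k && ~~ bit j k) * Num.sqrt (Pc k true)).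

Definition had (i j : 'I_(2 ^ m)) : R := \prod_(k < m) (-1) ^+ (bit i k && bit j k).

Definition hadT (N : nat) (X : 'M[R]_(2 ^ m, N)) : 'M[R]_(2 ^ m, N) :=
  \matrix_(i, c) ((2 ^ m)%:R^-1 * \sum_(j < 2 ^ m) X j c * had i j).

Definition ringT (N : nat) (X : 'M[R]_(2 ^ m, N)) : 'M[R]_(2 ^ m, N) :=
  \matrix_(i, c) \sum_(j < 2 ^ m) X j c * gam i j * Num.sqrt (Psym j).

Definition psi (i : 'I_(2 ^ m)) : R :=
  \prod_(k < m | bit i k) (2 * Num.sqrt (Pc k false * Pc k true)).

End Defs.

From HB Require Import structures.
From mathcomp Require Import all_boot all_order all_algebra.
From mathcomp Require Import ring lra.
Import Order.TTheory GRing.Theory Num.Theory.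
Local Open Scope ring_scope.

(* All coefficients involved are products over the bits k < m, and the indices
   i < 2^m are exactly the bit vectors of length m.  Hence a sum over an index
   of a product of such coefficients factorizes as a product over k of a sum of
   two terms.  With H the Hadamard matrix, D = diag(sqrt P_j), K the coefficient
   matrix of the first formula and L that of the second (without psi), this
   reduces the identities H (Gamma D) = diag(psi) K H and L K = 1 to 2x2
   computations in each bit, the first one using P_{C_k}(0) + P_{C_k}(1) = 1. *)

Lemma bit_inj {m i j : nat} : (i < 2 ^ m)%N -> (j < 2 ^ m)%N ->
  (forall k, (k < m)%N -> bit i k = bit j k) -> i = j.
Proof.
elim: m i j => [|m IHm] i j; first by rewrite expn0 !ltnS !leqn0 => /eqP-> /eqP->.
move=> lti ltj eq_bits.
have eq_odd : odd i = odd j by have := eq_bits 0%N isT; rewrite /bit expn0 !divn1.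
have eq_half : i./2 = j./2.
  apply: IHm; try by rewrite -divn2 ltn_divLR // -expnSr.
  by move=> k ltkm; have := eq_bits k.+1 ltkm; rewrite /bit expnS -!divn2 !divnMA.
by rewrite -(odd_double_half i) -(odd_double_half j) eq_odd eq_half.
Qed.

Section BitVectors.
Context {m : nat}.

Definition bits_of (j : 'I_(2 ^ m)) : {ffun 'I_m -> bool} := [ffun k : 'I_m => bit j k].

Lemma bits_of_bij : bijective bits_of.
Proof.
apply: inj_card_bij; last by rewrite card_ffun card_bool !card_ord.
move=> i j /ffunP eq_bits; apply: val_inj; apply: (bit_inj (ltn_ord i) (ltn_ord j)).
by move=> k ltkm; have := eq_bits (Ordinal ltkm); rewrite !ffunE.
Qed.

Lemma sum_prod_bits {R : comNzSemiRingType} (F : 'I_m -> bool -> R) :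
  \sum_(j < 2 ^ m) \prod_(k < m) F k (bit j k) = \prod_(k < m) \sum_(b : bool) F k b.
Proof.
rewrite bigA_distr_bigA (reindex bits_of); last exact/onW_bij/bits_of_bij.
by apply: eq_bigr => j _; apply: eq_bigr => k _; rewrite ffunE.
Qed.

Lemma prod_eq_bits {R : comNzSemiRingType} (j l : 'I_(2 ^ m)) :
  \prod_(k < m) ((bit j k == bit l k)%:R : R) = (j == l)%:R.
Proof.
have [->|neq_jl] := eqVneq j l; first by apply: big1 => k _; rewrite eqxx.
have [k neq_bit] : exists k : 'I_m, bit j k != bit l k.
  apply/existsP; apply: contraT; rewrite negb_exists => /forallP eq_bits.
  case/eqP: neq_jl; apply: val_inj; apply: (bit_inj (ltn_ord j) (ltn_ord l)) => k ltkm.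
  by have := eq_bits (Ordinal ltkm); rewrite negbK => /eqP.
by rewrite (bigD1 k) //= (negbTE neq_bit) mul0r.
Qed.

End BitVectors.

Lemma sqrt_prod (R : rcfType) (I : finType) (F : I -> R) :
  (forall i, 0 <= F i) -> Num.sqrt (\prod_i F i) = \prod_i Num.sqrt (F i).
Proof.
move=> F_ge0; rewrite -[RHS]ger0_norm; last by apply: prodr_ge0 => i _; exact: sqrtr_ge0.
by rewrite -sqrtr_sqr -prodrXl; congr Num.sqrt; apply: eq_bigr => i _; rewrite sqr_sqrtr.
Qed.

Lemma bitcoef_inv_bit (R : comNzRingType) (q : bool -> R) (j l : bool) :
  \sum_(b : bool) ((if b != j then q b - q false else 1) *
                   (if l != b then q false - q l else 1)) = (j == l)%:R.
Proof. by case: j; case: l; rewrite big_bool /=; ring. Qed.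

Section BitCoefficients.
Context {R : comNzRingType} {m : nat}.
Variable q : 'I_m -> bool -> R.

Definition bitcoef_mx : 'M[R]_(2 ^ m) :=
  \matrix_(i, j) \prod_(k < m | bit j k != bit i k) (q k false - q k (bit j k)).

Definition bitcoef_inv_mx : 'M[R]_(2 ^ m) :=
  \matrix_(j, i) \prod_(k < m | bit i k != bit j k) (q k (bit i k) - q k false).

Lemma mul_bitcoef_inv_mx : bitcoef_inv_mx *m bitcoef_mx = 1%:M.
Proof.
apply/matrixP => j l; rewrite !mxE -prod_eq_bits.
under eq_bigr => i _ do rewrite !mxE !(big_mkcond (fun k => _ != _)) -big_split.
rewrite (sum_prod_bits (fun k b => (if b != bit j k then q k b - q k false else 1) *
                                   (if bit l k != b then q k false - q k (bit l k) else 1))).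
by apply: eq_bigr => k _; rewrite bitcoef_inv_bit.
Qed.

End BitCoefficients.

Lemma hadamard_ring_bit (R : rcfType) (q : bool -> R) (i l : bool) :
  0 <= q false -> 0 <= q true -> q false + q true = 1 ->
  \sum_(b : bool) (-1) ^+ (i && b) *
     (((-1) ^+ (~~ b && l) * Num.sqrt (q false) + (-1) ^+ (b && ~~ l) * Num.sqrt (q true))
      * Num.sqrt (q l))
  = \sum_(b : bool) (if i then 2 * Num.sqrt (q false * q true) else 1) *
     ((if b != i then q false - q b else 1) * (-1) ^+ (b && l)).
Proof.
move=> q0_ge0 q1_ge0 q01; rewrite !big_bool sqrtrM //.
have := sqr_sqrtr q0_ge0; have := sqr_sqrtr q1_ge0.
case: i; case: l => /=; set s := Num.sqrt (q false); set t := Num.sqrt (q true).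
all: by clearbody s t => t2 s2; nra.
Qed.

Section HadamardKernel.
Context {R : rcfType} {m : nat}.
Variable p0 : 'I_m -> R.
Hypothesis p0_range : forall k, 0 < p0 k < 1.

Definition hadamard_mx : 'M[R]_(2 ^ m) := \matrix_(i, j) had R i j.

Definition ringT_mx : 'M[R]_(2 ^ m) := \matrix_(i, j) (gam p0 i j * Num.sqrt (Psym p0 j)).

Lemma hadTE (N : nat) (X : 'M[R]_(2 ^ m, N)) :
  hadT X = (2 ^ m)%:R^-1 *: (hadamard_mx *m X).
Proof.
apply/matrixP => i c; rewrite !mxE; congr (_ * _).
by apply: eq_bigr => j _; rewrite mxE mulrC.
Qed.

Lemma ringTE (N : nat) (X : 'M[R]_(2 ^ m, N)) : ringT p0 X = ringT_mx *m X.
Proof.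
apply/matrixP => i c; rewrite !mxE.
by apply: eq_bigr => j _; rewrite mxE [RHS]mulrC mulrA.
Qed.

Lemma Pc_ge0 k b : 0 <= Pc p0 k b.
Proof. by have /andP[p0_gt0 p0_lt1] := p0_range k; rewrite /Pc; case: b; lra. Qed.

Lemma sqrt_Psym j : Num.sqrt (Psym p0 j) = \prod_(k < m) Num.sqrt (Pc p0 k (bit j k)).
Proof. by rewrite sqrt_prod // => k; exact: Pc_ge0. Qed.

Lemma psi_neq0 i : psi p0 i != 0.
Proof.
apply/lt0r_neq0/prodr_gt0 => k _; have /andP[p0_gt0 p0_lt1] := p0_range k.
by rewrite mulr_gt0 // sqrtr_gt0 /Pc mulr_gt0 // subr_gt0.
Qed.

Lemma row_hadamard_ringT_mx i :
  row i (hadamard_mx *m ringT_mx) = psi p0 i *: row i (bitcoef_mx (Pc p0) *m hadamard_mx).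
Proof.
apply/rowP => l; rewrite !mxE big_distrr /=.
under eq_bigr => a _ do rewrite !mxE sqrt_Psym /had /gam -!big_split.
under [RHS]eq_bigr => a _ do
  rewrite !mxE /had /psi (big_mkcond (fun k : 'I_m => bit i k))
          (big_mkcond (fun k : 'I_m => bit a k != bit i k)) -!big_split.
rewrite (sum_prod_bits (fun k b => (-1) ^+ (bit i k && b) *
  (((-1) ^+ (~~ b && bit l k) * Num.sqrt (Pc p0 k false)
    + (-1) ^+ (b && ~~ bit l k) * Num.sqrt (Pc p0 k true)) * Num.sqrt (Pc p0 k (bit l k))))).
rewrite (sum_prod_bits (fun k b =>
  (if bit i k then 2 * Num.sqrt (Pc p0 k false * Pc p0 k true) else 1) *
  ((if b != bit i k then Pc p0 k false - Pc p0 k b else 1) * (-1) ^+ (b && bit l k)))).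
apply: eq_bigr => k _; apply: hadamard_ring_bit; try exact: Pc_ge0.
by rewrite /Pc addrC subrK.
Qed.

Lemma row_hadT_ringT (N : nat) (X : 'M[R]_(2 ^ m, N)) i :
  row i (hadT (ringT p0 X)) = psi p0 i *: row i (bitcoef_mx (Pc p0) *m hadT X).
Proof.
rewrite ringTE !hadTE -scalemxAr !linearZ /= mulmxA row_mul row_hadamard_ringT_mx.
by rewrite -scalemxAl -row_mul -mulmxA !scalerA mulrC.
Qed.

End HadamardKernel.

Theorem theorem2 (R : rcfType) (m N : nat) (p0 : 'I_m -> R)
  (hm : (0 < m)%N) (hN : (0 < N)%N)
  (hp : forall k, 0 < p0 k < 1) (X : 'M[R]_(2 ^ m, N)) :
  let S := ringT p0 X in
  (forall i : 'I_(2 ^ m),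
     row i (hadT S) =
       psi p0 i *: \sum_(j < 2 ^ m)
         (\prod_(k < m | bit j k != bit i k) (Pc p0 k false - Pc p0 k (bit j k)))
           *: row j (hadT X)) /\
  (forall j : 'I_(2 ^ m),
     row j (hadT X) =
       \sum_(i < 2 ^ m)
         ((psi p0 i)^-1 *
          \prod_(k < m | bit i k != bit j k) (Pc p0 k (bit i k) - Pc p0 k false))
           *: row i (hadT S)).
Proof.
move=> S; split=> [i | j].
  rewrite row_hadT_ringT // row_mul mulmx_sum_row; congr (_ *: _).
  by apply: eq_bigr => j _; rewrite !mxE.
have row_bitcoef i : row i (bitcoef_mx (Pc p0) *m hadT X) = (psi p0 i)^-1 *: row i (hadT S).
  by rewrite row_hadT_ringT // scalerA mulVf ?(psi_neq0 p0 hp) ?scale1r.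
rewrite -[hadT X]mul1mx -(mul_bitcoef_inv_mx (Pc p0)) -mulmxA row_mul mulmx_sum_row.
apply: eq_bigr => i _; rewrite row_bitcoef scalerA.
by congr (_ *: _); rewrite mulrC !mxE.
Qed.
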